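(* $\mathrm{EquSLP}\leq_{\mathrm{P}}\mathrm{2SoSSLP}$ (polynomial-time many-one reduction).
   Context: A (division-free, constant-free) SLP computing an integer is a sequence $(b_0,\dots,b_m)$ of integers with $b_0=1$ and $b_i=b_j\circ_i b_k$ for some $j,k<i$, $\circ_i\in\{+,-,\times\}$; it computes $b_m$. $\mathrm{EquSLP}$: given an SLP computing $N\in\mathbb{Z}$, decide whether $N=0$. $\mathrm{2SoSSLP}$: given an SLP computing $N\in\mathbb{Z}$, decide whether $N=a^2+b^2$ for some integers $a,b$. *)

From Stdlib Require Import ZArith List Arith.
Import ListNotations.

Inductive op := OAdd | OSub | OMul.

(* An SLP (b_0,...,b_m) is given by its instructions for b_1..b_m:
   the t-th instruction (t = 0..m-1, defining b_{t+1}) is (o, j, k)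
   meaning b_{t+1} = b_j o b_k. *)
Definition slp := list (op * nat * nat).

Fixpoint valid_from (t : nat) (s : slp) : Prop :=
  match s with
  | [] => True
  | (o, j, k) :: s' => j <= t /\ k <= t /\ valid_from (S t) s'
  end.
Definition slp_valid (s : slp) : Prop := valid_from 0 s.

Definition apply_op (o : op) (x y : Z) : Z :=
  match o with OAdd => (x + y)%Z | OSub => (x - y)%Z | OMul => (x * y)%Z end.

Fixpoint slp_vals_aux (acc : list Z) (s : slp) : list Z :=
  match s with
  | [] => acc
  | (o, j, k) :: s' =>
      slp_vals_aux (acc ++ [apply_op o (nth j acc 0%Z) (nth k acc 0%Z)]) s'
  end.
Definition slp_vals (s : slp) : list Z := slp_vals_aux [1%Z] s.
Definition slp_value (s : slp) : Z := last (slp_vals s) 1%Z.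

Fixpoint enc_pos (p : positive) : list bool :=
  match p with
  | xH => [true]
  | xO q => enc_pos q ++ [false]
  | xI q => enc_pos q ++ [true]
  end.
(* binary, most significant bit first; 0 is the empty string *)
Definition enc_nat (n : nat) : list bool :=
  match N.of_nat n with N0 => [] | Npos p => enc_pos p end.
(* self-delimiting: every bit doubled, then terminator 01 *)
Definition enc_nat_sd (n : nat) : list bool :=
  flat_map (fun b => [b; b]) (enc_nat n) ++ [false; true].
Definition enc_op (o : op) : list bool :=
  match o with OAdd => [false; false] | OSub => [false; true] | OMul => [true; false] end.
Definition enc_instr (i : op * nat * nat) : list bool :=
  let '(o, j, k) := i in enc_op o ++ enc_nat_sd j ++ enc_nat_sd k.
Definition enc_slp (s : slp) : list bool := flat_map enc_instr s.

Definition EquSLP (x : list bool) : Prop :=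
  exists s, slp_valid s /\ enc_slp s = x /\ slp_value s = 0%Z.

Definition TwoSoSSLP (x : list bool) : Prop :=
  exists s, slp_valid s /\ enc_slp s = x /\
    exists a b : Z, slp_value s = (a * a + b * b)%Z.

(* ---------- Machine model: multi-stack machines over {0,1} ----------
   (polynomially equivalent to multitape Turing machines).
   Registers are stacks of bits indexed by nat; the head of the list is the top. *)
Inductive instr :=
  | Push (r : nat) (b : bool)
  | Pop (r : nat)                        (* pop stack r (no-op if empty); pc+1 *)
  | Case (r : nat) (le lf lt : nat).     (* jump to le / lf / lt if stack r is
                                            empty / has top false / has top true *)

Definition program := list instr.
Record config := Cfg { pc : nat; regs : nat -> list bool }.

Definition upd (f : nat -> list bool) (r : nat) (v : list bool) : nat -> list bool :=
  fun r' => if Nat.eqb r' r then v else f r'.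

Definition halted (P : program) (c : config) : bool := length P <=? pc c.

Definition step (P : program) (c : config) : config :=
  match nth_error P (pc c) with
  | None => c
  | Some (Push r b) => Cfg (S (pc c)) (upd (regs c) r (b :: regs c r))
  | Some (Pop r) => Cfg (S (pc c)) (upd (regs c) r (tl (regs c r)))
  | Some (Case r le lf lt) =>
      match regs c r with
      | [] => Cfg le (regs c)
      | false :: _ => Cfg lf (regs c)
      | true :: _ => Cfg lt (regs c)
      end
  end.

Definition run (P : program) (n : nat) (c : config) : config := Nat.iter n (step P) c.

Definition init (x : list bool) : config :=
  Cfg 0 (fun r => if Nat.eqb r 0 then x else []).

Definition computes_in_time (P : program) (f : list bool -> list bool)
  (T : nat -> nat) : Prop :=
  forall x, exists t, t <= T (length x) /\
    halted P (run P t (init x)) = true /\ regs (run P t (init x)) 1 = f x.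

Definition poly_time_computable (f : list bool -> list bool) : Prop :=
  exists (P : program) (c d : nat),
    computes_in_time P f (fun n => c * n ^ d + c).

Definition poly_many_one_reducible (L1 L2 : list bool -> Prop) : Prop :=
  exists f, poly_time_computable f /\ forall x, L1 x <-> L2 (f x).

From Stdlib Require Import NArith ZArith List Arith Lia FunctionalExtensionality.
Import ListNotations.

(* An SLP computing N is extended by b_(m+1) = b_m * b_m, b_(m+2) = b_(m+1) + b_0 and
   b_(m+3) = b_0 - b_(m+2) to one computing -N^2, which is a sum of two squares iff N = 0.
   Index bounds need not be checked, as an invalid SLP stays invalid. On bit strings the
   reduction is thus x |-> x ++ enc(suffix m), m the number of encoded instructions. The
   encodings form a regular language, so one left-to-right pass of a finite automaton recognises
   them while a binary counter, least significant bit on top of a stack, counts the instructions;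
   the three new instructions are then written out from that counter. The at most n increments
   take O(log n) steps each, well within the quadratic bound proved. *)

Lemma sum_two_squares_neg_square (N : Z) :
  (exists a b : Z, (- (N * N) = a * a + b * b)%Z) <-> N = 0%Z.
Proof.
  split.
  - intros (a & b & E). nia.
  - intros ->. exists 0%Z, 0%Z. reflexivity.
Qed.

Definition neg_square_suffix (m : nat) : slp :=
  [(OMul, m, m); (OAdd, S m, 0); (OSub, 0, S (S m))].

Lemma valid_from_app t s u :
  valid_from t (s ++ u) <-> valid_from t s /\ valid_from (t + length s) u.
Proof.
  revert t. induction s as [|[[o j] k] s IH]; intros t; cbn [app valid_from length].
  - rewrite Nat.add_0_r. tauto.
  - rewrite IH, Nat.add_succ_comm. tauto.
Qed.

Lemma slp_valid_neg_square_suffix s :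
  slp_valid (s ++ neg_square_suffix (length s)) <-> slp_valid s.
Proof. unfold slp_valid. rewrite valid_from_app. cbn. intuition lia. Qed.

Lemma slp_vals_aux_app acc s u :
  slp_vals_aux acc (s ++ u) = slp_vals_aux (slp_vals_aux acc s) u.
Proof. revert acc. induction s as [|[[o j] k] s IH]; intros acc; cbn; auto. Qed.

Lemma slp_vals_aux_extends acc s :
  exists l, slp_vals_aux acc s = acc ++ l /\ length l = length s.
Proof.
  revert acc. induction s as [|[[o j] k] s IH]; intros acc; cbn.
  - exists []. rewrite app_nil_r. auto.
  - destruct (IH (acc ++ [apply_op o (nth j acc 0%Z) (nth k acc 0%Z)])) as (l & -> & L).
    rewrite <- app_assoc. eexists. split; [reflexivity|]. cbn. lia.
Qed.

Lemma length_slp_vals s : length (slp_vals s) = S (length s).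
Proof.
  unfold slp_vals. destruct (slp_vals_aux_extends [1%Z] s) as (l & -> & L). cbn. lia.
Qed.

Lemma nth0_slp_vals s : nth 0 (slp_vals s) 0%Z = 1%Z.
Proof. unfold slp_vals. destruct (slp_vals_aux_extends [1%Z] s) as (l & -> & _). reflexivity. Qed.

Lemma nth_length_slp_vals s : nth (length s) (slp_vals s) 0%Z = slp_value s.
Proof.
  unfold slp_value. pose proof (length_slp_vals s) as L.
  destruct (slp_vals s) as [|v V] using rev_ind; [discriminate|].
  rewrite length_app in L. cbn in L.
  rewrite last_last, app_nth2 by lia. replace (length s - length V) with 0 by lia. reflexivity.
Qed.

Lemma slp_vals_snoc s o j k :
  slp_vals (s ++ [(o, j, k)])
  = slp_vals s ++ [apply_op o (nth j (slp_vals s) 0%Z) (nth k (slp_vals s) 0%Z)].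
Proof. unfold slp_vals. rewrite slp_vals_aux_app. reflexivity. Qed.

Lemma slp_value_snoc s o j k :
  slp_value (s ++ [(o, j, k)]) = apply_op o (nth j (slp_vals s) 0%Z) (nth k (slp_vals s) 0%Z).
Proof. unfold slp_value at 1. rewrite slp_vals_snoc. apply last_last. Qed.

Lemma slp_value_neg_square_suffix s :
  slp_value (s ++ neg_square_suffix (length s)) = (- (slp_value s * slp_value s))%Z.
Proof.
  set (s1 := s ++ [(OMul, length s, length s)]).
  set (s2 := s1 ++ [(OAdd, S (length s), 0)]).
  assert (L1 : length s1 = S (length s)) by (unfold s1; rewrite length_app; cbn; lia).
  assert (L2 : length s2 = S (S (length s))) by (unfold s2; rewrite length_app, L1; cbn; lia).
  replace (s ++ neg_square_suffix (length s)) with (s2 ++ [(OSub, 0, S (S (length s)))])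
    by (unfold s2, s1; rewrite <- !app_assoc; reflexivity).
  rewrite slp_value_snoc, nth0_slp_vals, <- L2, nth_length_slp_vals.
  unfold s2. rewrite slp_value_snoc, nth0_slp_vals, <- L1, nth_length_slp_vals.
  unfold s1. rewrite slp_value_snoc, nth_length_slp_vals.
  cbn [apply_op]. lia.
Qed.

(** * Binary encodings *)

Definition double_bits (l : list bool) : list bool := flat_map (fun b => [b; b]) l.

Definition bits_val (l : list bool) : nat := fold_left (fun n b => 2 * n + Nat.b2n b) l 0.

Lemma bits_val_snoc l b : bits_val (l ++ [b]) = 2 * bits_val l + Nat.b2n b.
Proof. unfold bits_val. rewrite fold_left_app. reflexivity. Qed.

Lemma bits_val_enc_pos p : bits_val (enc_pos p) = Pos.to_nat p.
Proof.
  induction p as [p IH|p IH|]; cbn [enc_pos]; rewrite ?bits_val_snoc, ?IH;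
    rewrite ?Pos2Nat.inj_xI, ?Pos2Nat.inj_xO; cbn; lia.
Qed.

Lemma bits_val_enc_nat n : bits_val (enc_nat n) = n.
Proof.
  unfold enc_nat. rewrite <- (Nat2N.id n) at 2.
  destruct (N.of_nat n) as [|p]; [reflexivity|]. apply bits_val_enc_pos.
Qed.

Lemma enc_nat_inj n m : enc_nat n = enc_nat m -> n = m.
Proof. intros E. rewrite <- (bits_val_enc_nat n), <- (bits_val_enc_nat m), E. reflexivity. Qed.

Lemma enc_pos_head p : exists l, enc_pos p = true :: l.
Proof. induction p as [p [l IH]|p [l IH]|]; cbn; rewrite ?IH; eexists; reflexivity. Qed.

Lemma enc_nat_head n : enc_nat n = [] \/ exists l, enc_nat n = true :: l.
Proof. unfold enc_nat. destruct (N.of_nat n); [left | right; apply enc_pos_head]; reflexivity. Qed.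

Lemma enc_nat_surj l : exists n, enc_nat n = true :: l.
Proof.
  assert (Hp : exists p, enc_pos p = true :: l).
  { induction l as [|b l [p IH]] using rev_ind; [exists xH; reflexivity|].
    exists (if b then xI p else xO p). destruct b; cbn; rewrite IH; reflexivity. }
  destruct Hp as [p Hp]. exists (Pos.to_nat p). unfold enc_nat. rewrite positive_nat_N. exact Hp.
Qed.

Lemma double_bits_app_inj l1 l2 r1 r2 :
  double_bits l1 ++ [false; true] ++ r1 = double_bits l2 ++ [false; true] ++ r2 ->
  l1 = l2 /\ r1 = r2.
Proof.
  revert l2. induction l1 as [|b1 l1 IH]; intros [|b2 l2] E; cbn in E.
  - injection E. auto.
  - destruct b2; discriminate.
  - destruct b1; discriminate.
  - injection E as -> _ E. destruct (IH l2 E) as [-> ->]. auto.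
Qed.

Lemma enc_nat_sd_app_inj n1 n2 r1 r2 :
  enc_nat_sd n1 ++ r1 = enc_nat_sd n2 ++ r2 -> n1 = n2 /\ r1 = r2.
Proof.
  unfold enc_nat_sd. rewrite <- !app_assoc. intros E.
  destruct (double_bits_app_inj _ _ _ _ E) as [En ->]. auto using enc_nat_inj.
Qed.

Lemma enc_instr_app_inj i1 i2 r1 r2 :
  enc_instr i1 ++ r1 = enc_instr i2 ++ r2 -> i1 = i2 /\ r1 = r2.
Proof.
  destruct i1 as [[o1 j1] k1], i2 as [[o2 j2] k2]. unfold enc_instr. rewrite <- !app_assoc.
  intros E. assert (o1 = o2) as <- by (destruct o1, o2; cbn in E; congruence).
  apply app_inv_head in E.
  destruct (enc_nat_sd_app_inj _ _ _ _ E) as [<- E'].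
  destruct (enc_nat_sd_app_inj _ _ _ _ E') as [<- ->]. auto.
Qed.

Lemma enc_instr_nil i : enc_instr i <> [].
Proof. destruct i as [[[] j] k]; discriminate. Qed.

Lemma enc_slp_inj s1 s2 : enc_slp s1 = enc_slp s2 -> s1 = s2.
Proof.
  revert s2. induction s1 as [|i1 s1 IH]; intros [|i2 s2] E; cbn in E; auto.
  - destruct (enc_instr i2) eqn:Ei; [contradiction (enc_instr_nil i2) | discriminate].
  - destruct (enc_instr i1) eqn:Ei; [contradiction (enc_instr_nil i1) | discriminate].
  - destruct (enc_instr_app_inj _ _ _ _ E) as [-> E']. f_equal. auto.
Qed.

Lemma enc_slp_app s u : enc_slp (s ++ u) = enc_slp s ++ enc_slp u.
Proof. apply flat_map_app. Qed.

Lemma enc_slp_not_11 s : enc_slp s <> [true; true].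
Proof. destruct s as [|[[[] j] k] s]; discriminate. Qed.

Fixpoint succ_bits (c : list bool) : list bool :=
  match c with
  | [] => [true]
  | false :: c' => true :: c'
  | true :: c' => false :: succ_bits c'
  end.

(* Least significant bit first, so that [succ_bits] only changes a prefix: the top of a stack. *)
Definition lsb_bits (n : nat) : list bool := rev (enc_nat n).

Lemma rev_enc_pos_succ p : rev (enc_pos (Pos.succ p)) = succ_bits (rev (enc_pos p)).
Proof.
  induction p as [p IH|p IH|]; cbn [Pos.succ enc_pos]; rewrite ?rev_app_distr, ?IH; reflexivity.
Qed.

Lemma succ_lsb_bits n : succ_bits (lsb_bits n) = lsb_bits (S n).
Proof. destruct n as [|n]; [reflexivity|]. symmetry. apply rev_enc_pos_succ. Qed.

Lemma length_succ_bits c : length (succ_bits c) <= S (length c).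
Proof. induction c as [|[] c IH]; cbn; lia. Qed.

Lemma length_lsb_bits n : length (lsb_bits n) <= n.
Proof.
  induction n as [|n IH]; [reflexivity|].
  rewrite <- succ_lsb_bits. pose proof (length_succ_bits (lsb_bits n)). lia.
Qed.

Lemma length_double_bits l : length (double_bits l) = 2 * length l.
Proof.
  induction l as [|b l IH]; [reflexivity|].
  change (double_bits (b :: l)) with (b :: b :: double_bits l). cbn [length]. lia.
Qed.

Lemma length_enc_nat_sd n : length (enc_nat_sd n) <= 2 * n + 2.
Proof.
  pose proof (length_lsb_bits n) as L. unfold lsb_bits in L. rewrite length_rev in L.
  unfold enc_nat_sd. fold (double_bits (enc_nat n)).
  rewrite length_app, length_double_bits. cbn. lia.
Qed.

Lemma length_enc_neg_square_suffix m : length (enc_slp (neg_square_suffix m)) <= 8 * m + 24.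
Proof.
  pose proof (length_enc_nat_sd m). pose proof (length_enc_nat_sd (S m)).
  pose proof (length_enc_nat_sd (S (S m))). pose proof (length_enc_nat_sd 0).
  cbn -[enc_nat_sd]. rewrite app_nil_r. repeat (rewrite length_app; cbn [length]). lia.
Qed.

(** * Recognising encodings *)

(* [second] tells which operand is being read. As digits are doubled and [01] terminates,
   [Num0 k] has read the [0] of a terminator at the start (operand 0), [Digit1 k] the first half
   of a [11] (a nonzero operand starts with 1), and [Digit0 k] the first half of a [00] or of the
   terminator. *)
Inductive scan_state :=
  | Instr | Op0 | Op1
  | Num (second : bool) | Num0 (second : bool)
  | Digits (second : bool) | Digit0 (second : bool) | Digit1 (second : bool).

Inductive scan_move := Next (s : scan_state) | Done | Reject.

Definition operand_end (second : bool) : scan_move :=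
  if second then Done else Next (Num true).

Definition scan_step (s : scan_state) (b : bool) : scan_move :=
  match s, b with
  | Instr, false => Next Op0
  | Instr, true => Next Op1
  | Op0, _ => Next (Num false)
  | Op1, false => Next (Num false)
  | Op1, true => Reject
  | Num k, false => Next (Num0 k)
  | Num k, true => Next (Digit1 k)
  | Num0 k, false => Reject
  | Num0 k, true => operand_end k
  | Digits k, false => Next (Digit0 k)
  | Digits k, true => Next (Digit1 k)
  | Digit0 k, false => Next (Digits k)
  | Digit0 k, true => operand_end k
  | Digit1 k, false => Reject
  | Digit1 k, true => Next (Digits k)
  end.

Fixpoint scan (s : scan_state) (w : list bool) (k : nat) : option nat :=
  match w with
  | [] => match s with Instr => Some k | _ => None end
  | b :: w' =>
      match scan_step s b with
      | Next s' => scan s' w' k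
      | Done => scan Instr w' (S k)
      | Reject => None
      end
  end.

Definition scan_after_operand (second : bool) (w : list bool) (k : nat) : option nat :=
  if second then scan Instr w (S k) else scan (Num true) w k.

Lemma scan_Digits_double_bits second l w k :
  scan (Digits second) (double_bits l ++ [false; true] ++ w) k = scan_after_operand second w k.
Proof. induction l as [|[] l IH]; [destruct second|..]; auto. Qed.

Lemma scan_Num_enc_nat_sd second n w k :
  scan (Num second) (enc_nat_sd n ++ w) k = scan_after_operand second w k.
Proof.
  unfold enc_nat_sd. rewrite <- app_assoc.
  destruct (enc_nat_head n) as [-> | [l ->]]; [destruct second; reflexivity|].
  apply scan_Digits_double_bits.
Qed.

Lemma scan_enc_slp s w k : scan Instr (enc_slp s ++ w) k = scan Instr w (length s + k).
Proof.
  revert k. induction s as [|[[o j] j'] s IH]; intros k; [reflexivity|].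
  cbn [enc_slp flat_map enc_instr]. rewrite <- !app_assoc.
  replace (scan Instr _ k)
    with (scan (Num false) (enc_nat_sd j ++ enc_nat_sd j' ++ enc_slp s ++ w) k)
    by (destruct o; reflexivity).
  rewrite scan_Num_enc_nat_sd. cbn [scan_after_operand]. rewrite scan_Num_enc_nat_sd.
  cbn [scan_after_operand]. rewrite IH. f_equal. cbn [length]. lia.
Qed.

Lemma scan_Digits_sound n second w k m :
  length w <= n -> scan (Digits second) w k = Some m ->
  exists l w', w = double_bits l ++ [false; true] ++ w' /\ scan_after_operand second w' k = Some m.
Proof.
  revert w. induction n as [|n IH]; intros w Hw E; [destruct w; [discriminate | cbn in Hw; lia]|].
  destruct w as [|[] [|[] w]]; cbn in Hw, E; try discriminate.
  - destruct (IH w ltac:(lia) E) as (l & w' & -> & E'). exists (true :: l), w'. auto.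
  - exists [], w. destruct second; auto.
  - destruct (IH w ltac:(lia) E) as (l & w' & -> & E'). exists (false :: l), w'. auto.
Qed.

Lemma scan_Num_sound second w k m :
  scan (Num second) w k = Some m ->
  exists n w', w = enc_nat_sd n ++ w' /\ scan_after_operand second w' k = Some m.
Proof.
  intros E. destruct w as [|[] [|[] w]]; cbn in E; try discriminate.
  - destruct (scan_Digits_sound (length w) second w k m (le_n _) E) as (l & w' & -> & E').
    destruct (enc_nat_surj l) as [n En]. exists n, w'. split; [|exact E'].
    unfold enc_nat_sd. rewrite En, <- app_assoc. reflexivity.
  - exists 0, w. destruct second; auto.
Qed.

Lemma length_enc_nat_sd_app n w : 2 + length w <= length (enc_nat_sd n ++ w).
Proof. unfold enc_nat_sd. rewrite !length_app. cbn. lia. Qed.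

Lemma scan_sound_le n w k m :
  length w <= n -> scan Instr w k = Some m ->
  exists s, enc_slp s = w /\ m = length s + k.
Proof.
  revert w k. induction n as [|n IH]; intros w k Hw E.
  - destruct w; [|cbn in Hw; lia]. injection E as <-. exists []. auto.
  - destruct w as [|b1 [|b2 w]].
    + injection E as <-. exists []. auto.
    + destruct b1; discriminate.
    + assert (Eop : exists o, enc_op o = [b1; b2] /\ scan (Num false) w k = Some m)
        by (destruct b1, b2; cbn in E; try discriminate;
            [exists OMul | exists OSub | exists OAdd]; auto).
      destruct Eop as (o & Eo & E1).
      destruct (scan_Num_sound _ _ _ _ E1) as (j & w1 & -> & E2).
      destruct (scan_Num_sound _ _ _ _ E2) as (j' & w2 & -> & E3).
      pose proof (length_enc_nat_sd_app j (enc_nat_sd j' ++ w2)).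
      pose proof (length_enc_nat_sd_app j' w2).
      destruct (IH w2 (S k) ltac:(cbn in Hw; lia) E3) as (s & <- & ->).
      exists ((o, j, j') :: s). split; [|cbn; lia].
      cbn [enc_slp flat_map enc_instr]. rewrite Eo, <- !app_assoc. reflexivity.
Qed.

Lemma scan_sound w m : scan Instr w 0 = Some m -> exists s, enc_slp s = w /\ m = length s.
Proof.
  intros E. destruct (scan_sound_le (length w) w 0 m (le_n _) E) as (s & Es & ->).
  exists s. split; [exact Es | lia].
Qed.

Lemma scan_le s w k m : scan s w k = Some m -> m <= k + length w.
Proof.
  revert s k. induction w as [|b w IH]; intros s k E.
  - destruct s; cbn in E; try discriminate. injection E as <-. lia.
  - cbn [scan length] in *. destruct (scan_step s b); try discriminate; apply IH in E; lia.
Qed.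

(* [[]] would not do for non-encodings: it encodes the empty SLP, computing 1 = 1^2 + 0^2. *)
Definition reduction (x : list bool) : list bool :=
  match scan Instr x 0 with
  | Some m => x ++ enc_slp (neg_square_suffix m)
  | None => [true; true]
  end.

Lemma EquSLP_enc_slp s : EquSLP (enc_slp s) <-> slp_valid s /\ slp_value s = 0%Z.
Proof.
  split; [|intros [Hv Hz]; exists s; auto].
  intros (s' & Hv & E & Hz). apply enc_slp_inj in E as ->. auto.
Qed.

Lemma TwoSoSSLP_enc_slp s :
  TwoSoSSLP (enc_slp s) <-> slp_valid s /\ exists a b : Z, slp_value s = (a * a + b * b)%Z.
Proof.
  split; [|intros [Hv Hab]; exists s; auto].
  intros (s' & Hv & E & Hab). apply enc_slp_inj in E as ->. auto.
Qed.

Lemma reduction_correct x : EquSLP x <-> TwoSoSSLP (reduction x).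
Proof.
  unfold reduction. destruct (scan Instr x 0) as [m|] eqn:Es.
  - destruct (scan_sound x m Es) as (s & <- & ->).
    rewrite <- enc_slp_app, EquSLP_enc_slp, TwoSoSSLP_enc_slp,
      slp_valid_neg_square_suffix, slp_value_neg_square_suffix, sum_two_squares_neg_square.
    reflexivity.
  - split.
    + intros (s & _ & <- & _). rewrite <- (app_nil_r (enc_slp s)), scan_enc_slp in Es.
      discriminate.
    + intros (s & _ & E & _). contradiction (enc_slp_not_11 s).
Qed.

(** * Stack machines *)

(* Stack 0 holds the input, 1 the output, 2 the output produced so far (last bit on top, to be
   poured onto stack 1 at the end), 3 the instruction counter and 4 is scratch space. *)
Definition stacks (w o b c t : list bool) : nat -> list bool :=
  fun r => match r with 0 => w | 1 => o | 2 => b | 3 => c | 4 => t | _ => [] end.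

Lemma upd_stacks_0 w o b c t v : upd (stacks w o b c t) 0 v = stacks v o b c t.
Proof. apply functional_extensionality; intros [|[|[|[|[|r]]]]]; reflexivity. Qed.
Lemma upd_stacks_1 w o b c t v : upd (stacks w o b c t) 1 v = stacks w v b c t.
Proof. apply functional_extensionality; intros [|[|[|[|[|r]]]]]; reflexivity. Qed.
Lemma upd_stacks_2 w o b c t v : upd (stacks w o b c t) 2 v = stacks w o v c t.
Proof. apply functional_extensionality; intros [|[|[|[|[|r]]]]]; reflexivity. Qed.
Lemma upd_stacks_3 w o b c t v : upd (stacks w o b c t) 3 v = stacks w o b v t.
Proof. apply functional_extensionality; intros [|[|[|[|[|r]]]]]; reflexivity. Qed.
Lemma upd_stacks_4 w o b c t v : upd (stacks w o b c t) 4 v = stacks w o b c v.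
Proof. apply functional_extensionality; intros [|[|[|[|[|r]]]]]; reflexivity. Qed.

Definition exec_instr (ins : instr) (p : nat) (R : nat -> list bool) : config :=
  match ins with
  | Push r b => Cfg (S p) (upd R r (b :: R r))
  | Pop r => Cfg (S p) (upd R r (tl (R r)))
  | Case r le lf lt =>
      match R r with
      | [] => Cfg le R
      | false :: _ => Cfg lf R
      | true :: _ => Cfg lt R
      end
  end.

Lemma step_exec_instr P p ins R :
  nth_error P p = Some ins -> step P (Cfg p R) = exec_instr ins p R.
Proof. intros E. unfold step. cbn [pc regs]. rewrite E. destruct ins; reflexivity. Qed.

Definition Jmp (l : nat) : instr := Case 0 l l l.

Lemma exec_Jmp_target (w : list bool) (c : config) :
  match w with [] => c | false :: _ => c | true :: _ => c end = c.
Proof. destruct w as [|[] ?]; reflexivity. Qed.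

Lemma run_0 P c : run P 0 c = c.
Proof. reflexivity. Qed.

Lemma run_S P n c : run P (S n) c = run P n (step P c).
Proof. apply Nat.iter_succ_r. Qed.

Lemma run_add P m n c : run P (m + n) c = run P n (run P m c).
Proof. unfold run. rewrite Nat.add_comm. apply Nat.iter_add. Qed.

Definition reaches (P : program) (c c' : config) (T : nat) : Prop :=
  exists t, t <= T /\ run P t c = c'.

Lemma reaches_run {P t c c'} : run P t c = c' -> reaches P c c' t.
Proof. intros E. exists t. auto. Qed.

Lemma reaches_trans {P c1 c2 c3 T1 T2} :
  reaches P c1 c2 T1 -> reaches P c2 c3 T2 -> reaches P c1 c3 (T1 + T2).
Proof.
  intros (t1 & H1 & E1) (t2 & H2 & E2). exists (t1 + t2).
  split; [lia|]. rewrite run_add, E1. exact E2.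
Qed.

Lemma reaches_mono {P c c'} T {T'} : T <= T' -> reaches P c c' T -> reaches P c c' T'.
Proof. intros HT (t & Ht & E). exists t. split; [lia | exact E]. Qed.

Definition code_at (P : program) (a : nat) (l : program) : Prop :=
  forall i ins, nth_error l i = Some ins -> nth_error P (a + i) = Some ins.

Lemma code_at_refl P : code_at P 0 P.
Proof. intros i ins E. exact E. Qed.

Lemma code_at_app_inv {P a l1 l2} :
  code_at P a (l1 ++ l2) -> code_at P a l1 /\ code_at P (a + length l1) l2.
Proof.
  intros H. split; intros i ins E.
  - apply H. rewrite nth_error_app1; [exact E|]. apply nth_error_Some. congruence.
  - rewrite <- Nat.add_assoc. apply H. rewrite nth_error_app2 by lia.
    rewrite Nat.add_comm, Nat.add_sub. exact E.
Qed.

Lemma code_at_trans P Q a b l : code_at P a Q -> code_at Q b l -> code_at P (a + b) l.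
Proof. intros HP HQ i ins E. rewrite <- Nat.add_assoc. auto. Qed.

Lemma code_at_flat_map {A} (f : A -> program) n xs i x :
  (forall y, length (f y) = n) -> nth_error xs i = Some x -> code_at (flat_map f xs) (n * i) (f x).
Proof.
  intros Hn. revert i. induction xs as [|y xs IH]; intros [|i] E; try discriminate; cbn [flat_map].
  - injection E as ->. rewrite Nat.mul_0_r.
    exact (proj1 (code_at_app_inv (code_at_refl _))).
  - replace (n * S i) with (0 + length (f y) + n * i) by (rewrite Hn; lia).
    apply code_at_trans with (flat_map f xs); [|exact (IH i E)].
    exact (proj2 (code_at_app_inv (code_at_refl _))).
Qed.

Lemma nth_error_code_at_base P a l ins :
  code_at P a l -> nth_error l 0 = Some ins -> nth_error P a = Some ins.
Proof. intros H E. rewrite <- (Nat.add_0_r a). exact (H 0 ins E). Qed.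

Ltac simpl_stacks :=
  cbn [exec_instr Jmp stacks tl];
  rewrite ?upd_stacks_0, ?upd_stacks_1, ?upd_stacks_2, ?upd_stacks_3, ?upd_stacks_4,
    ?exec_Jmp_target, ?run_0.

(* Executes one instruction of a block [l] placed at [a] by a hypothesis [code_at P a l];
   addresses inside the block are kept in the form [a + i]. *)
Ltac step_in :=
  rewrite run_S;
  match goal with
  | Hc : code_at ?P ?a _ |- context [step ?P (Cfg (?a + ?i) ?R)] =>
      rewrite (step_exec_instr P (a + i) _ R (Hc i _ eq_refl)); simpl_stacks;
      rewrite <- ?Nat.add_succ_r
  | Hc : code_at ?P ?a _ |- context [step ?P (Cfg ?a ?R)] =>
      rewrite (step_exec_instr P a _ R (nth_error_code_at_base _ _ _ _ Hc eq_refl)); simpl_stacks;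
      try rewrite <- (Nat.add_1_r a)
  end.

(** * Gadgets *)

Lemma repeat_app_cons {A} (x : A) k l : repeat x k ++ x :: l = x :: repeat x k ++ l.
Proof. induction k as [|k IH]; cbn; [|rewrite IH]; reflexivity. Qed.

Lemma leading_ones c :
  exists k rest, c = repeat true k ++ rest /\ (rest = [] \/ exists r, rest = false :: r).
Proof.
  induction c as [|[] c IH].
  - exists 0, []. auto.
  - destruct IH as (k & rest & -> & Hrest). exists (S k), rest. auto.
  - exists 0, (false :: c). eauto.
Qed.

Lemma succ_bits_leading_ones k rest :
  succ_bits (repeat true k ++ rest) = repeat false k ++ succ_bits rest.
Proof. induction k as [|k IH]; cbn; [|rewrite IH]; reflexivity. Qed.

(* Pops the trailing ones of the counter, remembering them as zeros on the scratch stack, sets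
   the next bit and pushes the zeros back. *)
Definition inc_code (a : nat) : program :=
  [ Case 3 (a + 7) (a + 4) (a + 1);
    Pop 3; Push 4 false; Jmp a;
    Pop 3; Push 3 true; Jmp (a + 9);
    Push 3 true; Jmp (a + 9);
    Case 4 (a + 13) (a + 10) (a + 10);
    Pop 4; Push 3 false; Jmp (a + 9) ].

Section Increment.
Variables (P : program) (a : nat).
Hypothesis code : code_at P a (inc_code a).

Lemma inc_carry_loop w o b k rest t :
  run P (4 * k) (Cfg a (stacks w o b (repeat true k ++ rest) t))
  = Cfg a (stacks w o b rest (repeat false k ++ t)).
Proof.
  revert t. induction k as [|k IH]; intros t; [reflexivity|].
  replace (4 * S k) with (4 + 4 * k) by lia. rewrite run_add. cbn [repeat app].
  do 4 step_in. rewrite IH, repeat_app_cons. reflexivity.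
Qed.

Lemma inc_restore_loop w o b c k :
  run P (4 * k) (Cfg (a + 9) (stacks w o b c (repeat false k)))
  = Cfg (a + 9) (stacks w o b (repeat false k ++ c) []).
Proof.
  revert c. induction k as [|k IH]; intros c; [reflexivity|].
  replace (4 * S k) with (4 + 4 * k) by lia. rewrite run_add. cbn [repeat app].
  do 4 step_in. rewrite IH, repeat_app_cons. reflexivity.
Qed.

Lemma inc_spec w o b c :
  reaches P (Cfg a (stacks w o b c [])) (Cfg (a + 13) (stacks w o b (succ_bits c) []))
    (8 * length c + 6).
Proof.
  destruct (leading_ones c) as (k & rest & -> & [-> | (r & ->)]);
    rewrite succ_bits_leading_ones, length_app, repeat_length.
  - apply (reaches_mono (4 * k + (3 + (4 * k + 1)))); [lia|]. apply reaches_run.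
    rewrite run_add, inc_carry_loop, app_nil_r, run_add. do 3 step_in.
    rewrite run_add, inc_restore_loop. step_in. reflexivity.
  - apply (reaches_mono (4 * k + (4 + (4 * k + 1)))); [cbn; lia|]. apply reaches_run.
    rewrite run_add, inc_carry_loop, app_nil_r, run_add. do 4 step_in.
    rewrite run_add, inc_restore_loop. step_in. reflexivity.
Qed.

End Increment.

(* Reverses the counter onto the scratch stack, moves it back while writing every bit twice,
   then writes the terminator [01]. *)
Definition emit_code (a : nat) : program :=
  [ Case 3 (a + 7) (a + 1) (a + 4);
    Pop 3; Push 4 false; Jmp a;
    Pop 3; Push 4 true; Jmp a;
    Case 4 (a + 18) (a + 8) (a + 13);
    Pop 4; Push 3 false; Push 2 false; Push 2 false; Jmp (a + 7);
    Pop 4; Push 3 true; Push 2 true; Push 2 true; Jmp (a + 7);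
    Push 2 false; Push 2 true ].

Section Emit.
Variables (P : program) (a : nat).
Hypothesis code : code_at P a (emit_code a).

Lemma emit_reverse_loop w o b l t :
  run P (4 * length l) (Cfg a (stacks w o b l t)) = Cfg a (stacks w o b [] (rev l ++ t)).
Proof.
  revert t. induction l as [|e l IH]; intros t; [reflexivity|].
  replace (4 * length (e :: l)) with (4 + 4 * length l) by (cbn; lia). rewrite run_add.
  destruct e; do 4 step_in; rewrite IH; cbn; rewrite <- app_assoc; reflexivity.
Qed.

Lemma emit_write_loop w o b c l :
  run P (6 * length l) (Cfg (a + 7) (stacks w o b c l))
  = Cfg (a + 7) (stacks w o (rev (double_bits l) ++ b) (rev l ++ c) []).
Proof.
  revert b c. induction l as [|e l IH]; intros b c; [reflexivity|].
  replace (6 * length (e :: l)) with (6 + 6 * length l) by (cbn; lia). rewrite run_add.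
  destruct e; do 6 step_in; rewrite IH; cbn; rewrite <- !app_assoc; reflexivity.
Qed.

Lemma emit_spec w o b c :
  reaches P (Cfg a (stacks w o b c []))
    (Cfg (a + 20) (stacks w o (rev (double_bits (rev c) ++ [false; true]) ++ b) c []))
    (10 * length c + 4).
Proof.
  apply (reaches_mono (4 * length c + (1 + (6 * length (rev c) + 3))));
    [rewrite length_rev; lia|]. apply reaches_run.
  rewrite run_add, emit_reverse_loop, app_nil_r, run_add. step_in.
  rewrite run_add, emit_write_loop, rev_involutive, app_nil_r. do 3 step_in.
  rewrite rev_app_distr, <- app_assoc. reflexivity.
Qed.

End Emit.

Definition pour_code (a : nat) : program :=
  [ Case 2 (a + 7) (a + 1) (a + 4);
    Pop 2; Push 1 false; Jmp a;
    Pop 2; Push 1 true; Jmp a ].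

Section Pour.
Variables (P : program) (a : nat).
Hypothesis code : code_at P a (pour_code a).

Lemma pour_spec w o b c t :
  run P (4 * length b + 1) (Cfg a (stacks w o b c t)) = Cfg (a + 7) (stacks w (rev b ++ o) [] c t).
Proof.
  revert o. induction b as [|e b IH]; intros o.
  { cbn [length Nat.mul Nat.add]. step_in. reflexivity. }
  replace (4 * length (e :: b) + 1) with (4 + (4 * length b + 1)) by (cbn; lia). rewrite run_add.
  destruct e; do 4 step_in; rewrite IH; cbn; rewrite <- app_assoc; reflexivity.
Qed.

End Pour.

Inductive macro := MPush (b : bool) | MEmit | MInc.

Definition macro_code (a : nat) (m : macro) : program :=
  match m with MPush b => [Push 2 b] | MEmit => emit_code a | MInc => inc_code a end.

Fixpoint assemble (a : nat) (ms : list macro) : program :=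
  match ms with
  | [] => []
  | m :: ms' => macro_code a m ++ assemble (a + length (macro_code a m)) ms'
  end.

Definition macro_out (m : macro) (c : list bool) : list bool * list bool :=
  match m with
  | MPush b => ([b], c)
  | MEmit => (double_bits (rev c) ++ [false; true], c)
  | MInc => ([], succ_bits c)
  end.

Fixpoint macros_out (ms : list macro) (c : list bool) : list bool * list bool :=
  match ms with
  | [] => ([], c)
  | m :: ms' =>
      let (out1, c1) := macro_out m c in
      let (out2, c2) := macros_out ms' c1 in (out1 ++ out2, c2)
  end.

Lemma length_macro_out_counter m c : length (snd (macro_out m c)) <= S (length c).
Proof. destruct m; cbn [macro_out snd]; [lia | lia | apply length_succ_bits]. Qed.

Lemma macro_spec P a m w o b c :
  code_at P a (macro_code a m) ->
  reaches P (Cfg a (stacks w o b c []))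
    (Cfg (a + length (macro_code a m))
       (stacks w o (rev (fst (macro_out m c)) ++ b) (snd (macro_out m c)) []))
    (10 * length c + 6).
Proof.
  intros Hc. destruct m; cbn [macro_code macro_out fst snd] in *.
  - apply (reaches_mono 1); [lia|]. apply reaches_run. step_in. reflexivity.
  - apply (reaches_mono (10 * length c + 4)); [lia|]. exact (emit_spec P a Hc w o b c).
  - apply (reaches_mono (8 * length c + 6)); [lia|]. exact (inc_spec P a Hc w o b c).
Qed.

Lemma assemble_spec P ms a w o b c :
  code_at P a (assemble a ms) ->
  reaches P (Cfg a (stacks w o b c []))
    (Cfg (a + length (assemble a ms))
       (stacks w o (rev (fst (macros_out ms c)) ++ b) (snd (macros_out ms c)) []))
    (length ms * (10 * (length c + length ms) + 6)).
Proof.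
  revert a b c. induction ms as [|m ms IH]; intros a b c Hc.
  - exists 0. split; [lia|]. cbn. rewrite Nat.add_0_r. reflexivity.
  - cbn [assemble] in Hc. apply code_at_app_inv in Hc as [Hm Hms].
    pose proof (macro_spec P a m w o b c Hm) as Sm.
    pose proof (length_macro_out_counter m c) as Lc.
    cbn [assemble macros_out]. destruct (macro_out m c) as [out1 c1]. cbn [fst snd] in *.
    pose proof (IH _ (rev out1 ++ b) c1 Hms) as Sms.
    destruct (macros_out ms c1) as [out2 c2]. cbn [fst snd] in *.
    rewrite length_app, Nat.add_assoc, rev_app_distr, <- app_assoc.
    eapply reaches_mono; [|exact (reaches_trans Sm Sms)].
    cbn [length]. nia.
Qed.

Definition neg_square_suffix_macros : list macro :=
  map MPush (enc_op OMul) ++ [MEmit; MEmit; MInc]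
  ++ map MPush (enc_op OAdd) ++ [MEmit] ++ map MPush (enc_nat_sd 0) ++ [MInc]
  ++ map MPush (enc_op OSub ++ enc_nat_sd 0) ++ [MEmit].

Lemma emit_lsb_bits n : double_bits (rev (lsb_bits n)) ++ [false; true] = enc_nat_sd n.
Proof. unfold lsb_bits. rewrite rev_involutive. reflexivity. Qed.

Lemma macros_out_neg_square_suffix m :
  fst (macros_out neg_square_suffix_macros (lsb_bits m)) = enc_slp (neg_square_suffix m).
Proof.
  unfold neg_square_suffix_macros. change (enc_nat_sd 0) with [false; true].
  cbn -[lsb_bits succ_bits double_bits enc_nat_sd].
  rewrite !succ_lsb_bits, !emit_lsb_bits, <- !app_assoc. reflexivity.
Qed.

(** * The reduction machine *)

Definition scan_states : list scan_state :=
  [Instr; Op0; Op1;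
   Num false; Num0 false; Digits false; Digit0 false; Digit1 false;
   Num true; Num0 true; Digits true; Digit0 true; Digit1 true].

Definition state_index (s : scan_state) : nat :=
  match s with
  | Instr => 0 | Op0 => 1 | Op1 => 2
  | Num k => 3 + 5 * Nat.b2n k
  | Num0 k => 4 + 5 * Nat.b2n k
  | Digits k => 5 + 5 * Nat.b2n k
  | Digit0 k => 6 + 5 * Nat.b2n k
  | Digit1 k => 7 + 5 * Nat.b2n k
  end.

Lemma nth_error_scan_states s : nth_error scan_states (state_index s) = Some s.
Proof. destruct s; try destruct second; reflexivity. Qed.

Definition state_label (s : scan_state) : nat := 7 * state_index s.
Definition inc_label : nat := 7 * length scan_states.
Definition err_label : nat := inc_label + length (inc_code 0) + 1.
Definition suffix_label : nat := err_label + 3.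
Definition pour_label : nat :=
  suffix_label + length (assemble suffix_label neg_square_suffix_macros).
Definition halt_label : nat := pour_label + length (pour_code 0).

Definition move_label (mv : scan_move) : nat :=
  match mv with Next s => state_label s | Done => inc_label | Reject => err_label end.

Definition end_label (s : scan_state) : nat :=
  match s with Instr => suffix_label | _ => err_label end.

Definition scan_block (s : scan_state) : program :=
  [ Case 0 (end_label s) (state_label s + 1) (state_label s + 4);
    Pop 0; Push 2 false; Jmp (move_label (scan_step s false));
    Pop 0; Push 2 true; Jmp (move_label (scan_step s true)) ].

Definition scan_code : program := flat_map scan_block scan_states.

Definition err_code : program := [Push 1 true; Push 1 true; Jmp halt_label].

Definition reduction_machine : program :=
  scan_code ++ inc_code inc_label ++ [Jmp (state_label Instr)] ++ err_code
  ++ assemble suffix_label neg_square_suffix_macros ++ pour_code pour_label.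

Local Notation M := reduction_machine.

Lemma reduction_machine_layout :
  code_at M 0 scan_code /\ code_at M inc_label (inc_code inc_label) /\
  code_at M (inc_label + 13) [Jmp (state_label Instr)] /\ code_at M err_label err_code /\
  code_at M suffix_label (assemble suffix_label neg_square_suffix_macros) /\
  code_at M pour_label (pour_code pour_label).
Proof.
  pose proof (code_at_refl M) as H.
  apply code_at_app_inv in H as [H1 H]. apply code_at_app_inv in H as [H2 H].
  apply code_at_app_inv in H as [H3 H]. apply code_at_app_inv in H as [H4 H].
  apply code_at_app_inv in H as [H5 H6].
  repeat split; assumption.
Qed.

Lemma scan_block_at s : code_at M (state_label s) (scan_block s).
Proof.
  exact (code_at_trans _ _ 0 _ _ (proj1 reduction_machine_layout)
           (code_at_flat_map scan_block 7 _ _ s (fun _ => eq_refl) (nth_error_scan_states s))).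
Qed.

Lemma scan_block_read s b w buf c :
  reaches M (Cfg (state_label s) (stacks (b :: w) [] buf c []))
    (Cfg (move_label (scan_step s b)) (stacks w [] (b :: buf) c [])) 4.
Proof. pose proof (scan_block_at s). apply reaches_run. destruct b; do 4 step_in; reflexivity. Qed.

Lemma scan_block_exit s buf c :
  reaches M (Cfg (state_label s) (stacks [] [] buf c []))
    (Cfg (end_label s) (stacks [] [] buf c [])) 1.
Proof. pose proof (scan_block_at s). apply reaches_run. step_in. reflexivity. Qed.

Lemma inc_restart w b c :
  reaches M (Cfg inc_label (stacks w [] b c []))
    (Cfg (state_label Instr) (stacks w [] b (succ_bits c) [])) (8 * length c + 7).
Proof.
  destruct reduction_machine_layout as (_ & Hinc & Hjmp & _).
  assert (Restart : reaches M (Cfg (inc_label + 13) (stacks w [] b (succ_bits c) []))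
                       (Cfg (state_label Instr) (stacks w [] b (succ_bits c) [])) 1)
    by (clear Hinc; apply reaches_run; step_in; reflexivity).
  eapply reaches_mono; [|exact (reaches_trans (inc_spec M inc_label Hinc w [] b c) Restart)].
  lia.
Qed.

Definition scan_time (n k : nat) : nat := n * (8 * (k + n) + 11) + 1.

Lemma scan_machine_spec w : forall s buf k,
  match scan s w k with
  | Some m =>
      reaches M (Cfg (state_label s) (stacks w [] buf (lsb_bits k) []))
        (Cfg suffix_label (stacks [] [] (rev w ++ buf) (lsb_bits m) [])) (scan_time (length w) k)
  | None =>
      exists w' buf' c, reaches M (Cfg (state_label s) (stacks w [] buf (lsb_bits k) []))
        (Cfg err_label (stacks w' [] buf' c [])) (scan_time (length w) k)
  end.
Proof.
  induction w as [|b w IH]; intros s buf k.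
  - pose proof (scan_block_exit s buf (lsb_bits k)) as Exit.
    destruct s; cbn [scan]; try eexists _, _, _; exact Exit.
  - cbn [scan length rev]. rewrite <- app_assoc. cbn [app].
    pose proof (scan_block_read s b w buf (lsb_bits k)) as Read.
    destruct (scan_step s b) as [s'| |]; cbn [move_label] in Read.
    + specialize (IH s' (b :: buf) k). destruct (scan s' w k) as [m|].
      * eapply reaches_mono; [|exact (reaches_trans Read IH)]. unfold scan_time. nia.
      * destruct IH as (w' & buf' & c & IH). exists w', buf', c.
        eapply reaches_mono; [|exact (reaches_trans Read IH)]. unfold scan_time. nia.
    + pose proof (reaches_trans Read (inc_restart w (b :: buf) (lsb_bits k))) as Inc.
      rewrite succ_lsb_bits in Inc. pose proof (length_lsb_bits k).
      specialize (IH Instr (b :: buf) (S k)). destruct (scan Instr w (S k)) as [m|].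
      * eapply reaches_mono; [|exact (reaches_trans Inc IH)]. unfold scan_time. nia.
      * destruct IH as (w' & buf' & c & IH). exists w', buf', c.
        eapply reaches_mono; [|exact (reaches_trans Inc IH)]. unfold scan_time. nia.
    + exists w, (b :: buf), (lsb_bits k).
      eapply reaches_mono; [|exact Read]. unfold scan_time. nia.
Qed.

Lemma err_spec w b c :
  reaches M (Cfg err_label (stacks w [] b c []))
    (Cfg halt_label (stacks w [true; true] b c [])) 3.
Proof.
  destruct reduction_machine_layout as (_ & _ & _ & Herr & _).
  apply reaches_run. do 3 step_in. reflexivity.
Qed.

Lemma init_stacks x : init x = Cfg (state_label Instr) (stacks x [] [] (lsb_bits 0) []).
Proof.
  unfold init. f_equal. apply functional_extensionality. intros [|[|[|[|[|r]]]]]; reflexivity.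
Qed.

Lemma reduction_machine_spec x :
  exists R, reaches M (init x) (Cfg halt_label R) (3000 * length x ^ 2 + 3000) /\ R 1 = reduction x.
Proof.
  destruct reduction_machine_layout as (_ & _ & _ & _ & Hsuffix & Hpour).
  rewrite init_stacks. pose proof (scan_machine_spec x Instr [] 0) as Scan.
  unfold reduction. destruct (scan Instr x 0) as [m|] eqn:Es.
  - rewrite app_nil_r in Scan.
    pose proof (assemble_spec M _ suffix_label [] [] (rev x) (lsb_bits m) Hsuffix) as Emit.
    rewrite macros_out_neg_square_suffix in Emit.
    set (buf := rev (enc_slp (neg_square_suffix m)) ++ rev x) in Emit.
    set (c := snd (macros_out neg_square_suffix_macros (lsb_bits m))) in Emit.
    pose proof (reaches_run (pour_spec M pour_label Hpour [] [] buf c [])) as Pour.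
    eexists. split.
    + eapply reaches_mono; [|exact (reaches_trans Scan (reaches_trans Emit Pour))].
      pose proof (scan_le _ _ _ _ Es) as Lm. pose proof (length_lsb_bits m) as Lc.
      assert (Lbuf : length buf <= length x + 8 * m + 24).
      { pose proof (length_enc_neg_square_suffix m).
        unfold buf. rewrite length_app, !length_rev. lia. }
      change (length neg_square_suffix_macros) with 16. unfold scan_time.
      rewrite Nat.pow_2_r. clear - Lm Lc Lbuf. nia.
    + cbn [stacks]. unfold buf. rewrite app_nil_r, rev_app_distr, !rev_involutive. reflexivity.
  - destruct Scan as (w & buf & c & Scan).
    exists (stacks w [true; true] buf c []). split; [|reflexivity].
    eapply reaches_mono; [|exact (reaches_trans Scan (err_spec w buf c))].
    unfold scan_time. rewrite Nat.pow_2_r. nia.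
Qed.

Theorem mainTheorem14 : poly_many_one_reducible EquSLP TwoSoSSLP.
Proof.
  exists reduction. split; [|exact reduction_correct].
  exists reduction_machine, 3000, 2. intros x.
  destruct (reduction_machine_spec x) as (R & (t & Ht & Run) & Out).
  exists t. rewrite Run. auto.
Qed.
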